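(* Let $\beta\in(0,1)$. Let $\mathcal R^{(\beta)}$ be a random closed subset of $[0,1]$ with capacity functional $\mathbb P(\mathcal R^{(\beta)}\cap K\neq\emptyset)=\mathrm{Leb}(K)^\beta$ for all compact $K\subset[0,1]$. Let $Q_\beta$ be an $\mathbb N$-valued random variable with \[ \mathbb P(Q_\beta=k)=\frac{\beta(1-\beta)_{(k-1)\uparrow}}{k!},\quad k\in\mathbb N, \] where $(a)_{n\uparrow}=a(a+1)\cdots(a+n-1)$ for $n\in\mathbb N$ and $(a)_{0\uparrow}=1$, and let $U_1,U_2,\dots$ be i.i.d. uniform on $(0,1)$, independent of $Q_\beta$. Then $\mathcal R^{(\beta)}\overset{d}{=}\bigcup_{i=1}^{Q_\beta}\{U_i\}$ as random closed sets of $[0,1]$.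
   Context: $\mathrm{Leb}$ is Lebesgue measure. Random closed sets are random elements of the space of closed subsets of $[0,1]$ with the Fell topology; their law is determined by the capacity functional $K\mapsto\mathbb P(R\cap K\ne\emptyset)$, $K$ compact. *)

From HB Require Import structures.
From mathcomp Require Import all_boot all_order all_algebra.
From mathcomp Require Import all_classical all_reals all_analysis.
Set Implicit Arguments. Unset Strict Implicit. Unset Printing Implicit Defensive.
Import Order.TTheory GRing.Theory Num.Theory.
Import numFieldNormedType.Exports.
Local Open Scope classical_set_scope.
Local Open Scope ring_scope.

Definition hitset (R : realType) (K : set R) : set (set R) :=
  [set F | F `&` K !=set0].

(* Effros sigma-algebra on closed subsets of [0,1]: generated by the hitting
   events of compact subsets of [0,1] (= Borel sigma-algebra of the Fell topology). *)
Definition effros (R : realType) : set (set (set R)) :=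
  <<s [set hitset K | K in [set K : set R | compact K /\ K `<=` `[0%R, 1%R]]] >>.

Definition random_closed_set d (T : measurableType d) (R : realType)
    (X : T -> set R) : Prop :=
  (forall w, closed (X w) /\ X w `<=` `[0%R, 1%R]) /\
  (forall A, effros A -> measurable (X @^-1` A)).

Definition rising (R : realType) (a : R) (n : nat) : R :=
  \prod_(j < n) (a + j%:R).

Definition indep_nat_seq d (T : measurableType d) (R : realType)
    (P : probability T R) (Q : T -> nat) (U : nat -> T -> R) : Prop :=
  forall (n : nat) (A : set nat) (B : nat -> set R),
    (forall i, measurable (B i)) ->
    P (Q @^-1` A `&` \bigcap_(i in `I_n) (U i @^-1` B i)) =
    (P (Q @^-1` A) * \prod_(i < n) P (U i @^-1` B i))%E.

(* The law of a random closed set of [0, 1] is determined by its hitting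
   probabilities (Choquet): the miss events {F | F `&` K = set0}, K compact,
   form a pi-system generating the Effros sigma-algebra, so two laws agreeing
   on them agree everywhere.  For X = {U_i | i < Q}, independence gives
   P(X misses K) = E[(1 - Leb K)^Q] = G(1 - Leb K), with G the generating
   function of Q.  For the Sibuya law the tail t_k = P(Q > k) = (1-beta)_k/k!
   satisfies 1 - G(y) = (1 - y) T(y) and G' = beta T, where T = sum t_k y^k,
   so (1 - G(y)) (1 - y)^-beta is constant on [0, 1): G(y) = 1 - (1 - y)^beta,
   also at y = 1 by Abel's theorem.  Hence P(X hits K) = (Leb K)^beta. *)

From HB Require Import structures.
From mathcomp Require Import all_boot all_order all_algebra.
From mathcomp Require Import all_classical all_reals all_analysis.
From mathcomp Require Import ring lra measurable_realfun.
Import Order.TTheory GRing.Theory Num.Theory.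
Import numFieldNormedType.Exports.
Local Open Scope classical_set_scope.
Local Open Scope ring_scope.
Set Implicit Arguments. Unset Strict Implicit.

Section linear_pseries.
Variable R : realType.

Lemma sum_linear_geometric (y : R) n :
  (1 - y) ^+ 2 * \sum_(0 <= k < n) k.+1%:R * y ^+ k =
  1 - n.+1%:R * y ^+ n + n%:R * y ^+ n.+1.
Proof.
elim: n => [|n IHn]; first by rewrite big_nil mulr0 expr0 mulr1 mul0r addr0 subrr.
by rewrite big_nat_recr //= mulrDr IHn !exprS -!natr1; ring.
Qed.

Lemma is_cvg_series_linear_geometric (y : R) : 0 <= y < 1 ->
  cvgn (series (fun k => k.+1%:R * y ^+ k)).
Proof.
case/andP=> y0 y1; apply: nondecreasing_is_cvgn.
  by apply: nondecreasing_series => n _ _; rewrite mulr_ge0 // exprn_ge0.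
exists ((1 - y) ^- 2) => _ [n _ <-] /=.
have y2_gt0 : 0 < (1 - y) ^+ 2 by rewrite exprn_gt0 // subr_gt0.
rewrite /series /= -(ler_pM2l y2_gt0) mulrV ?unitfE ?gt_eqF // sum_linear_geometric.
have : 0 <= n%:R * y ^+ n * (1 - y) + y ^+ n.
  by rewrite addr_ge0 ?exprn_ge0 // !mulr_ge0 ?exprn_ge0 // subr_ge0 ltW.
by rewrite exprS -natr1; nra.
Qed.

Lemma is_cvg_pseries_linear_bound (c : nat -> R) (x : R) : `|x| < 1 ->
  (forall k, `|c k| <= k.+1%:R) -> cvgn (pseries c x).
Proof.
move=> x1 c_le; apply: normed_cvg.
apply: (@series_le_cvg _ _ (fun k => k.+1%:R * `|x| ^+ k)).
- by move=> n /=.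
- by move=> n /=; rewrite mulr_ge0 // exprn_ge0.
- by move=> n /=; rewrite normrM normrX ler_wpM2r // exprn_ge0.
- by apply: is_cvg_series_linear_geometric; rewrite x1 andbT.
Qed.

Lemma is_cvg_pseries_unit_bound (c : nat -> R) (x : R) : `|x| < 1 ->
  (forall k, 0 <= c k <= 1) -> cvgn (pseries c x).
Proof.
move=> x1 c01; apply: is_cvg_pseries_linear_bound => // k.
have /andP[c0 c1] := c01 k.
by rewrite ger0_norm // (le_trans c1) // ler1n.
Qed.

Lemma is_derive_powR_subr1 (a x : R) : x < 1 ->
  is_derive x 1 (fun y => (1 - y) `^ a) (a * (1 - x) `^ (a - 1) * -1).
Proof.
move=> x1; have x1_gt0 : 0 < 1 - x by rewrite subr_gt0.
apply: (@is_derive1_comp R (fun z => z `^ a) (fun y => 1 - y)).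
  exact: is_derive1_powR.
by rewrite -[-1]sub0r; apply: is_deriveB.
Qed.

Lemma is_derive0_eq (f : R -> R) (a b : R) : a <= b ->
  (forall x, a <= x <= b -> is_derive x 1 f 0) -> f a = f b.
Proof.
rewrite le_eqVlt => /orP[/eqP -> // | ab] f'0.
have f'0_itv x : x \in `]a, b[ -> is_derive x 1 f 0.
  by rewrite in_itv => /andP[ax xb]; apply: f'0; rewrite !ltW.
have f_cont : {within `[a, b], continuous f}.
  by apply: derivable_within_continuous => x; rewrite in_itv => /f'0 [].
have [x _] := @MVT R f (fun=> 0) a b ab f'0_itv f_cont.
by move/eqP; rewrite mul0r subr_eq0 => /eqP.
Qed.

End linear_pseries.

Section sibuya_coefficients.
Variables (R : realType) (beta : R).
Hypothesis beta01 : 0 <= beta <= 1.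

Definition sibuya_tail (k : nat) : R := rising (1 - beta) k / k`!%:R.

Definition sibuya_pmf (k : nat) : R :=
  if k is 0 then 0 else beta * rising (1 - beta) k.-1 / k`!%:R.

Lemma sibuya_tail0 : sibuya_tail 0 = 1.
Proof. by rewrite /sibuya_tail /rising big_ord0 fact0 divr1. Qed.

Lemma sibuya_tailS k :
  sibuya_tail k.+1 = sibuya_tail k * (1 - beta / k.+1%:R).
Proof.
rewrite /sibuya_tail /rising big_ord_recr /= factS natrM.
have fact_neq0 : (k`!%:R : R) != 0 by rewrite pnatr_eq0 -lt0n fact_gt0.
have Sk_neq0 : (k.+1%:R : R) != 0 by rewrite pnatr_eq0.
rewrite -natr1 in Sk_neq0 *; field.
by rewrite Sk_neq0 fact_neq0.
Qed.

Lemma sibuya_pmfS k : sibuya_pmf k.+1 = beta / k.+1%:R * sibuya_tail k.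
Proof.
rewrite /sibuya_pmf /sibuya_tail /= factS natrM.
have fact_neq0 : (k`!%:R : R) != 0 by rewrite pnatr_eq0 -lt0n fact_gt0.
have Sk_neq0 : (k.+1%:R : R) != 0 by rewrite pnatr_eq0.
by field; rewrite fact_neq0 addrC natr1 Sk_neq0.
Qed.

Lemma sibuya_pmf_tail k : sibuya_pmf k.+1 = sibuya_tail k - sibuya_tail k.+1.
Proof. by rewrite sibuya_pmfS sibuya_tailS; ring. Qed.

Lemma sibuya_step_itv k : 0 <= 1 - beta / k.+1%:R <= 1.
Proof.
case/andP: beta01 => b0 b1.
rewrite subr_ge0 gerBl divr_ge0 // ler_pdivrMr ?ltr0Sn // mul1r.
by rewrite (le_trans b1) // ler1n.
Qed.

Lemma sibuya_tail_itv k : 0 <= sibuya_tail k <= 1.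
Proof.
elim: k => [|k /andP[t0 t1]]; first by rewrite sibuya_tail0 ler01 lexx.
have /andP[s0 s1] := sibuya_step_itv k.
by rewrite sibuya_tailS mulr_ge0 //= mulr_ile1.
Qed.

Lemma sibuya_pmf_ge0 k : 0 <= sibuya_pmf k.
Proof.
case: k => [|k]; first exact: lexx.
have /andP[t0 _] := sibuya_tail_itv k.
by case/andP: beta01 => b0 _; rewrite sibuya_pmfS mulr_ge0 // divr_ge0.
Qed.

Lemma sibuya_pmf_le1 k : sibuya_pmf k <= 1.
Proof.
case: k => [|k]; first exact: ler01.
have /andP[_ t1] := sibuya_tail_itv k; have /andP[t0 _] := sibuya_tail_itv k.+1.
by rewrite sibuya_pmf_tail lerBlDr (le_trans t1) // lerDl.
Qed.

Lemma pseries_diffs_sibuya_pmf :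
  pseries_diffs sibuya_pmf = (fun k => beta * sibuya_tail k).
Proof.
apply/funext => k; rewrite /pseries_diffs sibuya_pmfS.
have Sk_neq0 : (k.+1%:R : R) != 0 by rewrite pnatr_eq0.
by field.
Qed.

Lemma pseries_sibuya_pmf_tail (x : R) n :
  pseries sibuya_pmf x n.+1 + (1 - x) * pseries sibuya_tail x n.+1 =
  1 - sibuya_tail n * x ^+ n.+1.
Proof.
rewrite /pseries /series /=.
elim: n => [|n IHn].
  by rewrite !big_nat1 sibuya_tail0 expr0 /sibuya_pmf; ring.
rewrite big_nat_recr // [X in _ + _ * X]big_nat_recr // sibuya_pmf_tail.
by rewrite mulrDr addrACA IHn !exprS; ring.
Qed.

End sibuya_coefficients.

Lemma eseries_EFin (R : realType) (u : nat -> R) (l : R) : series u @ \oo --> l ->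
  (\sum_(k <oo) (u k)%:E = l%:E)%E.
Proof.
move=> u_l; have -> : (fun n => \sum_(0 <= k < n) (u k)%:E)%E = EFin \o series u.
  by apply/funext => n /=; rewrite sumEFin.
by rewrite EFin_lim ?(cvg_lim _ u_l) //; exact: cvgP u_l.
Qed.

Section sibuya_pgf.
Variables (R : realType) (beta : R).
Hypothesis beta01 : 0 <= beta <= 1.
Local Notation pmf := (sibuya_pmf beta).
Local Notation tail := (sibuya_tail beta).

Definition sibuya_pgf (x : R) : R := limn (pseries (sibuya_pmf beta) x).

Lemma is_cvg_pseries_sibuya_tail (x : R) : `|x| < 1 -> cvgn (pseries tail x).
Proof.
by move=> x1; apply: is_cvg_pseries_unit_bound => // k; exact: sibuya_tail_itv.
Qed.

Lemma is_cvg_pseries_sibuya_pmf (x : R) : `|x| < 1 -> cvgn (pseries pmf x).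
Proof.
move=> x1; apply: is_cvg_pseries_unit_bound => // k.
by rewrite sibuya_pmf_ge0 ?sibuya_pmf_le1.
Qed.

Lemma is_derive_sibuya_pgf (x : R) : `|x| < 1 ->
  is_derive x 1 sibuya_pgf (beta * limn (pseries tail x)).
Proof.
move=> x1; pose r := (1 + `|x|) / 2.
have r0 : 0 <= r by rewrite divr_ge0 // addr_ge0.
have r1 : `|r| < 1 by rewrite (ger0_norm r0) ltr_pdivrMr //; lra.
have xr : `|x| < `|r| by rewrite (ger0_norm r0) ltr_pdivlMr //; lra.
have [b0 b1] := andP beta01.
have d1_cvg : cvgn (pseries (pseries_diffs pmf) r).
  apply: is_cvg_pseries_unit_bound => // k; rewrite pseries_diffs_sibuya_pmf.
  by have /andP[t0 t1] := sibuya_tail_itv beta01 k; rewrite mulr_ge0 //= mulr_ile1.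
have d2_cvg : cvgn (pseries (pseries_diffs (pseries_diffs pmf)) r).
  apply: is_cvg_pseries_linear_bound => // k.
  rewrite pseries_diffs_sibuya_pmf /pseries_diffs.
  have /andP[t0 t1] := sibuya_tail_itv beta01 k.+1.
  have d2_le : k.+1%:R * (beta * tail k.+1) <= k.+1%:R.
    by rewrite ler_piMr // mulr_ile1.
  have d2_ge0 : 0 <= k.+1%:R * (beta * tail k.+1).
    by rewrite mulr_ge0 //; exact: mulr_ge0 b0 t0.
  by rewrite ger0_norm.
have := pseries_snd_diffs (is_cvg_pseries_sibuya_pmf r1) d1_cvg d2_cvg xr.
rewrite pseries_diffs_sibuya_pmf.
have -> : pseries (fun k => beta * tail k) x =
    series (beta *: (fun k => tail k * x ^+ k)).
  apply/funext => n; rewrite /pseries /series /=.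
  by apply: eq_bigr => k _; rewrite -mulrA.
by rewrite lim_seriesZ //; exact: is_cvg_pseries_sibuya_tail.
Qed.

Lemma one_sub_sibuya_pgf (x : R) : `|x| < 1 ->
  1 - sibuya_pgf x = (1 - x) * limn (pseries tail x).
Proof.
move=> x1.
have pmf_cvg : (fun n => pseries pmf x n.+1) @ \oo --> sibuya_pgf x.
  by rewrite cvg_shiftS; exact: is_cvg_pseries_sibuya_pmf.
have last_term0 : (fun n => tail n * x ^+ n.+1) @ \oo --> (0 : R).
  rewrite -(mul0r x); under eq_fun do rewrite exprSr mulrA.
  by apply: cvgMl; apply: cvg_series_cvg_0; exact: is_cvg_pseries_sibuya_tail.
have rhs_cvg : (fun n => 1 - tail n * x ^+ n.+1 - (1 - x) * pseries tail x n.+1)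
    @ \oo --> 1 - 0 - (1 - x) * limn (pseries tail x).
  apply: cvgB; first by apply: cvgB => //; exact: cvg_cst.
  apply: cvgMr; rewrite (cvg_shiftS (pseries tail x)).
  exact: is_cvg_pseries_sibuya_tail.
have pmf_eq : (fun n => pseries pmf x n.+1) =
    (fun n => 1 - tail n * x ^+ n.+1 - (1 - x) * pseries tail x n.+1).
  by apply/funext => n; rewrite -pseries_sibuya_pmf_tail addrK.
rewrite pmf_eq in pmf_cvg.
by rewrite (cvg_unique _ pmf_cvg rhs_cvg) //; ring.
Qed.

Lemma sibuya_pgf0 : sibuya_pgf 0 = 0.
Proof.
rewrite /sibuya_pgf (_ : pseries pmf 0 = cst 0) ?lim_cst //.
by apply/funext => n; rewrite /pseries /series /=; apply: big1 => -[|k] _;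
  rewrite ?mul0r // expr0n mulr0.
Qed.

Lemma sibuya_pgfE (y : R) : 0 <= y < 1 -> sibuya_pgf y = 1 - (1 - y) `^ beta.
Proof.
case/andP => y0 y1.
pose h := (cst 1 - sibuya_pgf) * (fun x => (1 - x) `^ (- beta)).
have h'0 x : 0 <= x <= y -> is_derive x 1 h 0.
  case/andP=> x0 xy; have x1 : x < 1 by rewrite (le_lt_trans xy).
  have x1_norm : `|x| < 1 by rewrite ger0_norm.
  have x1_gt0 : 0 < 1 - x by rewrite subr_gt0.
  have dG := is_derive_sibuya_pgf x1_norm.
  have dP := is_derive_powR_subr1 (- beta) x1.
  apply: is_derive_eq; rewrite !fctE one_sub_sibuya_pgf //.
  have powR_split : (1 - x) `^ (- beta) = (1 - x) `^ (- beta - 1) * (1 - x).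
    rewrite -[X in _ * X](powRr1 (ltW x1_gt0)) -powRD ?subrK //.
    by apply/implyP => _; rewrite gt_eqF.
  by rewrite powR_split /GRing.scale /=; ring.
have h0 : h 0 = 1 by rewrite /h !fctE sibuya_pgf0 !subr0 powR1 mulr1.
have /esym := is_derive0_eq y0 h'0; rewrite h0 /h !fctE powRN => /divr1_eq <-.
by rewrite opprB addrC subrK.
Qed.

Lemma cvg_pseries_sibuya_pmf (y : R) : 0 <= y < 1 ->
  pseries pmf y @ \oo --> 1 - (1 - y) `^ beta.
Proof.
move=> y01; rewrite -sibuya_pgfE //; apply: is_cvg_pseries_sibuya_pmf.
by case/andP: y01 => y0 y1; rewrite ger0_norm.
Qed.

Lemma series_sibuya_pmf n : series pmf n.+1 = 1 - tail n.
Proof.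
have := pseries_sibuya_pmf_tail beta 1 n.
rewrite expr1n mulr1 subrr mul0r addr0 => <-.
by rewrite /pseries /series /=; apply: eq_bigr => k _; rewrite expr1n mulr1.
Qed.

Lemma series_sibuya_pmf_le1 n : series pmf n <= 1.
Proof.
case: n => [|n]; first by rewrite /series /= big_nil ler01.
by have /andP[t0 _] := sibuya_tail_itv beta01 n; rewrite series_sibuya_pmf gerBl.
Qed.

Lemma is_cvg_series_sibuya_pmf : cvgn (series pmf).
Proof.
apply: nondecreasing_is_cvgn.
  by apply: nondecreasing_series => n _ _; exact: sibuya_pmf_ge0.
by exists 1 => _ [n _ <-]; exact: series_sibuya_pmf_le1.
Qed.

Lemma lim_series_sibuya_pmf : 0 < beta -> limn (series pmf) = 1.
Proof.
move=> beta_gt0; apply/le_anti/andP; split.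
  apply: limr_le; first exact: is_cvg_series_sibuya_pmf.
  by apply: filterE; exact: series_sibuya_pmf_le1.
apply/ler_addgt0Pr => e e0; have [e1|e1] := leP 1 e.
  rewrite (le_trans e1) // lerDr; apply: limr_ge; first exact: is_cvg_series_sibuya_pmf.
  by apply: filterE => n; apply: sumr_ge0 => k _; exact: sibuya_pmf_ge0.
(* Abel: the partial sums at 1 dominate those at y, where the pgf equals 1 - e. *)
pose y := 1 - e `^ beta^-1.
have e_root_itv : 0 < e `^ beta^-1 <= 1.
  rewrite powR_gt0 //= -(powRr0 e) ger_powR //; first by rewrite e0 ltW.
  by rewrite invr_ge0 ltW.
have y01 : 0 <= y < 1.
  by case/andP: e_root_itv => r0 r1; rewrite subr_ge0 r1 ltrBlDr ltrDl.
have e_root_pow : (e `^ beta^-1) `^ beta = e.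
  by rewrite -powRrM mulVf ?gt_eqF // powRr1 // ltW.
have := cvg_pseries_sibuya_pmf y01; rewrite /y subKr e_root_pow => pmf_cvg.
rewrite -lerBlDr -(cvg_lim _ pmf_cvg) //.
apply: ler_lim; [exact: cvgP pmf_cvg | exact: is_cvg_series_sibuya_pmf |].
apply: filterE => n; apply: ler_sum => k _.
case/andP: y01 => y0 y1.
by rewrite ler_piMr ?sibuya_pmf_ge0 // exprn_ile1 // ltW.
Qed.

Lemma eseries_sibuya_pmf1 : 0 < beta -> (\sum_(k <oo) (pmf k)%:E = 1%:E)%E.
Proof.
move=> beta_gt0; apply: eseries_EFin.
by rewrite -(lim_series_sibuya_pmf beta_gt0); exact: is_cvg_series_sibuya_pmf.
Qed.

Lemma eseries_sibuya_pmf (y : R) : 0 < beta -> 0 <= y <= 1 ->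
  (\sum_(k <oo) (pmf k * y ^+ k)%:E = (1 - (1 - y) `^ beta)%:E)%E.
Proof.
move=> beta_gt0 /andP[y0]; rewrite le_eqVlt => /orP[/eqP -> | y1].
  rewrite subrr powR0 ?gt_eqF // subr0 -(eseries_sibuya_pmf1 beta_gt0).
  by apply: eq_eseriesr => k _; rewrite expr1n mulr1.
by apply: eseries_EFin; apply: cvg_pseries_sibuya_pmf; rewrite y0.
Qed.

End sibuya_pgf.

Section lebesgue_measure_unit_interval.
Variable R : realType.
Local Notation mu := (@lebesgue_measure R).

Lemma lebesgue_measure_sub01 (K : set R) : measurable K -> K `<=` `[0, 1] ->
  mu K = (fine (mu K))%:E /\ 0 <= fine (mu K) <= 1.
Proof.
move=> mK K01.
have muK_le1 : (mu K <= 1)%E.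
  have <- : mu `[0, 1] = 1%E.
    by rewrite lebesgue_measure_itv /= lte_fin ltr01 oppr0 adde0.
  by rewrite le_measure ?inE.
have muK_fin : mu K \is a fin_num by rewrite ge0_fin_numE // (le_lt_trans muK_le1) ?ltry.
by split; [rewrite fineK | rewrite -!lee_fin fineK // measure_ge0].
Qed.

Lemma lebesgue_measure_setIoo01 (K : set R) : measurable K -> K `<=` `[0, 1] ->
  mu (K `&` `]0, 1[) = mu K.
Proof.
move=> mK K01.
have ends0 : mu ([set 0] `|` [set 1]) = 0%E.
  apply/eqP; rewrite -measure_le0.
  have := measureU2 mu (measurable_set1 (0 : R)) (measurable_set1 (1 : R)).
  by rewrite /= !lebesgue_measure_set1 adde0.
have K_ends : K `\` `]0, 1[ `<=` [set 0] `|` [set 1].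
  move=> x [/K01]; rewrite /= !in_itv /= => /andP[x0 x1].
  rewrite lt_neqAle x0 lt_neqAle x1 !andbT.
  have [-> _|_] := eqVneq x 1; first by right.
  by rewrite /= andbT => /negP/negPn/eqP; left.
rewrite [in RHS](measureDI mu mK (measurable_itv `]0, 1[%R)).
rewrite (subset_measure0 (mu := mu) _ _ K_ends ends0) ?add0e //.
  by apply: measurableD => //; exact: measurable_itv.
by apply: measurableU; exact: measurable_set1.
Qed.

Lemma lebesgue_measure_setCoo01 (K : set R) : measurable K -> K `<=` `[0, 1] ->
  mu (~` K `&` `]0, 1[) = (1 - fine (mu K))%:E.
Proof.
move=> mK K01; have [muKE _] := lebesgue_measure_sub01 mK K01.
have mu_oo : mu `]0, 1[ = 1%E.
  by rewrite lebesgue_measure_itv /= lte_fin ltr01 oppr0 adde0.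
rewrite setIC -setDE (measureD (mu := mu)) //=; last by rewrite mu_oo ltry.
by rewrite setIC lebesgue_measure_setIoo01 // mu_oo muKE.
Qed.

End lebesgue_measure_unit_interval.

Lemma g_sigma_algebra_setC (T : Type) (G : set (set T)) :
  <<s [set ~` A | A in G] >> = <<s G >>.
Proof.
rewrite eqEsubset; split; apply: smallest_sub; try exact: smallest_sigma_algebra.
  by move=> _ [A GA <-]; rewrite -setTD; apply: sigma_algebraCD; exact: sub_sigma_algebra.
move=> A GA; rewrite -[A]setCK -setTD; apply: sigma_algebraCD.
by apply: sub_sigma_algebra; exists A.
Qed.

Section effros_laws.
Variable R : realType.
Local Notation compact01 := [set K : set R | compact K /\ K `<=` `[0%R, 1%R]].

Lemma effros_misses : @effros R = <<s [set ~` hitset K | K in compact01] >>.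
Proof. by rewrite /effros -g_sigma_algebra_setC image_comp. Qed.

Lemma effros_preimage_measurable d (T : measurableType d) (X : T -> set R) :
  (forall K, compact01 K -> measurable (X @^-1` hitset K)) ->
  forall A, effros A -> measurable (X @^-1` A).
Proof.
move=> mX A effA.
have := smallest_sub (sigma_algebra_image X (@sigma_algebra_measurable _ T)) _ effA.
rewrite /image_set_system /= setTI; apply => _ [K K01 <-] /=.
by rewrite setTI; exact: mX.
Qed.

Lemma misses_setI_closed : setI_closed [set ~` hitset K | K in compact01].
Proof.
move=> _ _ [K1 [cK1 K1_01] <-] [K2 [cK2 K2_01] <-]; exists (K1 `|` K2).
  by split; [exact: compactU | move=> x [/K1_01|/K2_01]].
apply/seteqP; split => F /=.
  move=> F_K12; split => -[x [Fx Kx]]; apply: F_K12.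
    by exists x; split => //; left.
  by exists x; split => //; right.
by case=> F_K1 F_K2 [x [Fx [K1x|K2x]]]; [apply: F_K1 | apply: F_K2]; exists x.
Qed.

Lemma effros_law_eq d1 (T1 : measurableType d1) (P1 : probability T1 R)
    (X1 : T1 -> set R) d2 (T2 : measurableType d2) (P2 : probability T2 R)
    (X2 : T2 -> set R) :
  (forall A, effros A -> measurable (X1 @^-1` A)) ->
  (forall A, effros A -> measurable (X2 @^-1` A)) ->
  (forall K, compact01 K -> P1 (X1 @^-1` hitset K) = P2 (X2 @^-1` hitset K)) ->
  forall A, effros A -> P1 (X1 @^-1` A) = P2 (X2 @^-1` A).
Proof.
move=> mX1 mX2 hit12; pose G := [set ~` hitset K | K in compact01].
pose M := g_sigma_algebraType G.
have mfX1 : measurable_fun setT (X1 : T1 -> M).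
  by move=> _ B mB; rewrite setTI; apply: mX1; rewrite effros_misses.
have mfX2 : measurable_fun setT (X2 : T2 -> M).
  by move=> _ B mB; rewrite setTI; apply: mX2; rewrite effros_misses.
move=> A; rewrite effros_misses => GA.
apply: (@measure_unique _ R M G (fun=> setT) erefl misses_setI_closed _ _
  (pushforward P1 (X1 : T1 -> M)) (pushforward P2 (X2 : T2 -> M))).
- move=> _; exists set0; first by split; [exact: compact0 | exact: sub0set].
  by apply/seteqP; split => // F _ [x []].
- by apply/seteqP; split => // F _; exists 0%N.
- have eff_hit K : compact01 K -> effros (hitset K).
    by move=> K01; apply: sub_sigma_algebra; exists K.
  move=> _ [K K01 <-].
  change (P1 (X1 @^-1` ~` hitset K) = P2 (X2 @^-1` ~` hitset K)).
  rewrite -!preimage_setC !probability_setC; first by rewrite hit12.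
    exact: mX2 (eff_hit K K01).
  exact: mX1 (eff_hit K K01).
- move=> _; change (P1 (X1 @^-1` setT) < +oo)%E.
  by rewrite preimage_setT probability_setT ltry.
- exact: GA.
Qed.

End effros_laws.

Definition finite_sample (T R : Type) (Q : T -> nat) (U : nat -> T -> R) (w : T) :
  set R := [set x | exists2 i : nat, (i < Q w)%N & U i w = x].

Section nat_valued.
Context d (T : measurableType d) (R : realType) (P : probability T R).
Variable Q : T -> nat.
Hypothesis mQ : measurable_fun setT Q.

Lemma measurable_preimage_nat (S : set nat) : measurable (Q @^-1` S).
Proof. by rewrite -[_ @^-1` _]setTI; exact: mQ. Qed.

Lemma eseries_probability_preimage_nat : (\sum_(k <oo) P (Q @^-1` [set k]))%E = 1%E.
Proof.
rewrite -(probability_setT P) -measure_semi_bigcup.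
- by congr (P _); apply/seteqP; split => // w _; exists (Q w).
- by move=> k; exact: measurable_preimage_nat.
- by move=> i j _ _ [w [/= <- <-]].
- exact: bigcupT_measurable (fun k => measurable_preimage_nat _).
Qed.

Lemma probability_preimage_nat_eq (p : nat -> R) : (forall k, 0 <= p k) ->
  (\sum_(k <oo) (p k)%:E)%E = 1%E ->
  (forall k, (0 < k)%N -> P (Q @^-1` [set k]) = (p k)%:E) ->
  forall k, P (Q @^-1` [set k]) = (p k)%:E.
Proof.
move=> p_ge0 p_sum1 pQ [|k]; last exact: pQ.
pose S := (\sum_(1 <= k <oo) (p k)%:E)%E.
have sumP : (P (Q @^-1` [set 0%N]) + S)%E = 1%E.
  rewrite -eseries_probability_preimage_nat nneseries_recl //; congr (_ + _)%E.
  by congr (limn _); apply/funext => n; apply: eq_big_nat => k /andP[k1 _]; rewrite pQ.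
have sump : ((p 0%N)%:E + S)%E = 1%E.
  by rewrite -p_sum1 [RHS]nneseries_recl // => k _; rewrite lee_fin.
have S_ge0 : (0 <= S)%E by apply: nneseries_ge0 => k _; rewrite lee_fin.
have S_fin : S \is a fin_num.
  by rewrite ge0_fin_numE // (le_lt_trans _ (ltry 1)) // -sump leeDr // lee_fin.
have : (P (Q @^-1` [set 0%N]) + S)%E = ((p 0%N)%:E + S)%E by rewrite sumP sump.
by move/(congr1 (fun x => x - S)%E); rewrite /= !addeK.
Qed.

End nat_valued.

Section finite_sample.
Context d (T : measurableType d) (R : realType) (P : probability T R).
Variables (Q : T -> nat) (U : nat -> T -> R).
Hypotheses (mQ : measurable_fun setT Q) (mU : forall i, measurable_fun setT (U i)).

Local Notation X := (finite_sample Q U).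

Let measurable_preimage_U i (B : set R) : measurable B -> measurable (U i @^-1` B).
Proof. by move=> mB; rewrite -[_ @^-1` _]setTI; exact: mU. Qed.

Lemma finite_sample_hitE (K : set R) :
  X @^-1` hitset K = \bigcup_i (Q @^-1` [set n | (i < n)%N] `&` U i @^-1` K).
Proof.
apply/seteqP; split => w /=.
  by case=> x [[i iQ <-] Kx]; exists i.
by case=> i _ [iQ KU]; exists (U i w); split => //; exists i.
Qed.

Lemma finite_sample_missE (K : set R) :
  X @^-1` (~` hitset K) =
  \bigcup_k (Q @^-1` [set k] `&` \bigcap_(i in `I_k) U i @^-1` ~` K).
Proof.
apply/seteqP; split => w /=.
  move=> X_miss; exists (Q w) => //; split => // i /= iQ KU.
  by apply: X_miss; exists (U i w); split => //; exists i.
by case=> k _ [/= <- U_miss] [x [[i iQ <-] Kx]]; exact: U_miss iQ Kx.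
Qed.

Lemma measurable_finite_sample_hit (K : set R) :
  measurable K -> measurable (X @^-1` hitset K).
Proof.
move=> mK; rewrite finite_sample_hitE; apply: bigcupT_measurable => i.
by apply: measurableI; [exact: measurable_preimage_nat | exact: measurable_preimage_U].
Qed.

Lemma measurable_finite_sample A : effros A -> measurable (X @^-1` A).
Proof.
apply: effros_preimage_measurable => K [cK _].
exact: measurable_finite_sample_hit (compact_measurable cK).
Qed.

Lemma finite_sample_miss (K : set R) : indep_nat_seq P Q U -> measurable K ->
  P (X @^-1` (~` hitset K)) =
  (\sum_(k <oo) (P (Q @^-1` [set k]) * \prod_(i < k) P (U i @^-1` ~` K)))%E.
Proof.
move=> QU_indep mK.
have mF k : measurable (Q @^-1` [set k] `&` \bigcap_(i in `I_k) U i @^-1` ~` K).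
  apply: measurableI; first exact: measurable_preimage_nat.
  by apply: bigcap_measurableType => i _; exact: measurable_preimage_U (measurableC mK).
rewrite finite_sample_missE measure_semi_bigcup //.
- apply: eq_eseriesr => k _.
  exact: QU_indep k [set k] (fun=> ~` K) (fun=> measurableC mK).
- by move=> i j _ _ [w [[/= <- _] [/= <- _]]].
- exact: bigcupT_measurable.
Qed.

End finite_sample.

Section sibuya_uniform_sample.
Context d (T : measurableType d) (R : realType) (P : probability T R).
Variables (beta : R) (Q : T -> nat) (U : nat -> T -> R).
Hypotheses (beta_itv : 0 < beta <= 1)
  (mQ : measurable_fun setT Q) (mU : forall i, measurable_fun setT (U i))
  (Q_sibuya : forall k, P (Q @^-1` [set k]) = (sibuya_pmf beta k)%:E)
  (U_uniform : forall i (B : set R), measurable B ->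
     P (U i @^-1` B) = lebesgue_measure (B `&` `]0, 1[))
  (QU_indep : indep_nat_seq P Q U).

Lemma sibuya_sample_hit (K : set R) : measurable K -> K `<=` `[0, 1] ->
  P (finite_sample Q U @^-1` hitset K) = (fine (lebesgue_measure K) `^ beta)%:E.
Proof.
move=> mK K01; have [b0 b1] := andP beta_itv.
have beta01' : 0 <= beta <= 1 by rewrite ltW.
have [_ /andP[L0 L1]] := lebesgue_measure_sub01 mK K01.
set L := fine (lebesgue_measure K) in L0 L1 *.
have U_miss k : (\prod_(i < k) P (U i @^-1` ~` K))%E = ((1 - L) ^+ k)%:E.
  elim: k => [|k IHk]; first by rewrite big_ord0 expr0.
  rewrite big_ord_recr /= IHk U_uniform ?lebesgue_measure_setCoo01 //.
    by rewrite exprSr EFinM.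
  exact: measurableC.
have miss : P (finite_sample Q U @^-1` ~` hitset K) = (1 - L `^ beta)%:E.
  rewrite finite_sample_miss //.
  have -> : 1 - L `^ beta = 1 - (1 - (1 - L)) `^ beta by rewrite subKr.
  have L'01 : 0 <= 1 - L <= 1 by rewrite subr_ge0 L1 gerBl.
  rewrite -(eseries_sibuya_pmf beta01' b0 L'01).
  by apply: eq_eseriesr => k _; rewrite Q_sibuya U_miss EFinM.
rewrite -[hitset K]setCK -preimage_setC probability_setC; last first.
  by rewrite -preimage_setC; apply: measurableC; exact: measurable_finite_sample_hit.
by rewrite miss -EFinB subKr.
Qed.

End sibuya_uniform_sample.

Theorem lemma3p1 (R : realType) (beta : R) (hbeta : 0 < beta < 1)
  (d1 : measure_display) (T1 : measurableType d1) (P1 : probability T1 R)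
  (Rb : T1 -> set R) (hRb : random_closed_set Rb)
  (hcap : forall K : set R, compact K -> K `<=` `[0, 1] ->
     P1 [set w | Rb w `&` K !=set0] = ((fine (lebesgue_measure K)) `^ beta)%:E)
  (d2 : measure_display) (T2 : measurableType d2) (P2 : probability T2 R)
  (Q : T2 -> nat) (hQm : measurable_fun setT Q)
  (hQ : forall k : nat, (0 < k)%N ->
     P2 (Q @^-1` [set k]) = (beta * rising (1 - beta) k.-1 / k`!%:R)%:E)
  (U : nat -> T2 -> R) (hUm : forall i, measurable_fun setT (U i))
  (hU : forall i (B : set R), measurable B ->
     P2 (U i @^-1` B) = lebesgue_measure (B `&` `]0, 1[))
  (hind : indep_nat_seq P2 Q U) :
  let X := fun w : T2 => [set x | exists2 i : nat, (i < Q w)%N & U i w = x] in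
  (forall A, effros A -> measurable (X @^-1` A)) /\
  (forall A, effros A -> P1 (Rb @^-1` A) = P2 (X @^-1` A)).
Proof.
move=> X; have mX := measurable_finite_sample hQm hUm.
have [b0 b1] := andP hbeta.
have beta01 : 0 <= beta <= 1 by rewrite !ltW.
have Q_sibuya k : P2 (Q @^-1` [set k]) = (sibuya_pmf beta k)%:E.
  apply: (probability_preimage_nat_eq hQm (sibuya_pmf_ge0 beta01)).
    exact: eseries_sibuya_pmf1.
  by case=> // n _; rewrite hQ.
split=> //; apply: (effros_law_eq (proj2 hRb) mX) => K [cK K01].
rewrite hcap //; apply/esym.
by apply: sibuya_sample_hit => //; [rewrite b0 ltW | exact: compact_measurable].
Qed.
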